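(* Let $C$ be a circuit over variables $x_1,\dots,x_n$ that may also contain gates computing the constants $0$ and $1$, and suppose that (as a function of $x_1,\dots,x_n$) $C$ does not imply any variable $x_i$ and is not implied by any variable $x_i$. Let $u,v$ be new variables, let $C(x_1,\dots,x_n,u,v)$ denote the circuit obtained from $C$ by replacing every constant-$1$ gate by $u$ and every constant-$0$ gate by $v$, and let $C'=t_2(u,C(x_1,\dots,x_n,u,v),v)$. Then $\{u,v\}$ is the only dominant pair for $C'$.
   Context: $t_2(x,y,z)=(x\wedge y)\vee(x\wedge z)\vee(y\wedge z)$ is the ternary majority function. A circuit $C$ implies a variable $x$ if every satisfying assignment of $C$ sets $x$ to 1; $C$ is implied by $x$ if every assignment setting $x$ to 1 satisfies $C$. A pair of two distinct variables $\{s,t\}$ is dominant for a circuit $C$ if for every $\alpha\in\{0,1\}$ and every truth assignment $I$ with $I(s)=I(t)=\alpha$, $I$ satisfies $C$ if and only if $\alpha=1$. *)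

From mathcomp Require Import all_boot.
Set Implicit Arguments. Unset Strict Implicit. Unset Printing Implicit Defensive.

(* Boolean circuits over variables of type V, represented as expression trees
   (the semantics of a DAG circuit is that of its tree unfolding). *)
Inductive circuit (V : Type) : Type :=
| Var of V
| Const of bool
| Gate of (seq bool -> bool) & seq (circuit V).
Arguments Const {V}.

Fixpoint eval (V : Type) (I : V -> bool) (C : circuit V) : bool :=
  match C with
  | Var x => I x
  | Const b => b
  | Gate f args => f (map (eval I) args)
  end.

Definition implies_var (V : Type) (C : circuit V) (x : V) : Prop :=
  forall I : V -> bool, eval I C -> I x.

Definition implied_by_var (V : Type) (C : circuit V) (x : V) : Prop :=
  forall I : V -> bool, I x -> eval I C.

Definition dominant_pair (V : eqType) (C : circuit V) (s t : V) : Prop :=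
  s != t /\
  forall (alpha : bool) (I : V -> bool),
    I s = alpha -> I t = alpha -> (eval I C = alpha).

Definition t2 (a b c : bool) : bool := [|| a && b, a && c | b && c].
Definition t2_gate (s : seq bool) : bool :=
  if s is [:: a; b; c] then t2 a b c else false.

(* New variables: old variables are [inl x]; u := inr true, v := inr false. *)
Definition var_u (V : Type) : V + bool := inr true.
Definition var_v (V : Type) : V + bool := inr false.

Fixpoint replace_consts (V : Type) (C : circuit V) : circuit (V + bool) :=
  match C with
  | Var x => Var (inl x)
  | Const b => Var (inr b)
  | Gate f args => Gate f (map (@replace_consts V) args)
  end.

Definition Cprime (V : Type) (C : circuit V) : circuit (V + bool) :=
  Gate t2_gate [:: Var (var_u V); replace_consts C; Var (var_v V)].

(* On assignments with u = v, C' = t_2(u, _, v) takes the common value of u and v, so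
   {u, v} is dominant.  On assignments with u = 1 and v = 0, C' computes C itself; hence
   a dominant pair {x_i, u} would make C implied by x_i, and a dominant pair {x_i, v}
   would make C imply x_i.  Finally no pair of two old variables is dominant: setting
   them to 1 and u = v = 0 makes C' false. *)

From mathcomp Require Import all_boot.

Set Implicit Arguments.
Unset Strict Implicit.

Lemma t2_xyx (a b : bool) : t2 a b a = a.
Proof. by case: a; case: b. Qed.

Lemma t2_1x0 (b : bool) : t2 true b false = b.
Proof. by case: b. Qed.

Definition const_ext {V : Type} (J : V -> bool) (z : V + bool) : bool :=
  match z with inl x => J x | inr b => b end.

Lemma eval_replace_consts (V : Type) (J : V -> bool) (C : circuit V) :
  eval (const_ext J) (replace_consts C) = eval J C.
Proof.
move: C; fix IH 1; case=> [x|b|f args] //=; congr f.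
by elim: args => [|a l IHl] //=; rewrite IH IHl.
Qed.

Lemma dominant_pairC (V : eqType) (C : circuit V) (s t : V) :
  dominant_pair C s t -> dominant_pair C t s.
Proof. by case; rewrite eq_sym => st D; split=> // alpha I It Is; apply: D. Qed.

Section Cprime.

Variables (V : eqType) (C : circuit V).

Lemma eval_Cprime_uv (I : V + bool -> bool) (alpha : bool) :
  I (var_u V) = alpha -> I (var_v V) = alpha -> eval I (Cprime C) = alpha.
Proof. by move=> /= -> ->; rewrite t2_xyx. Qed.

Lemma eval_Cprime_const_ext (J : V -> bool) :
  eval (const_ext J) (Cprime C) = eval J C.
Proof. by rewrite /= eval_replace_consts t2_1x0. Qed.

Lemma dominant_pair_Cprime_uv : dominant_pair (Cprime C) (var_u V) (var_v V).
Proof. by split=> // alpha I; apply: eval_Cprime_uv. Qed.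

Lemma dominant_pair_Cprime_u_implied_by (i : V) :
  dominant_pair (Cprime C) (inl i) (var_u V) -> implied_by_var C i.
Proof. by case=> _ D J Ji; rewrite -eval_Cprime_const_ext; apply: D. Qed.

Lemma dominant_pair_Cprime_v_implies (i : V) :
  dominant_pair (Cprime C) (inl i) (var_v V) -> implies_var C i.
Proof.
case=> _ D J; apply: contraLR => /negbTE Ji.
by rewrite -eval_Cprime_const_ext (D false).
Qed.

Lemma not_dominant_pair_Cprime_inl (i j : V) :
  ~ dominant_pair (Cprime C) (inl i) (inl j).
Proof.
case=> _ /(_ true [pred z | if z is inl _ then true else false] erefl erefl).
by rewrite (@eval_Cprime_uv _ false).
Qed.

Lemma dominant_pair_Cprime_inl (i : V) (t : V + bool) :
  (forall x : V, ~ implies_var C x) -> (forall x : V, ~ implied_by_var C x) ->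
  ~ dominant_pair (Cprime C) (inl i) t.
Proof.
move=> not_implies not_implied; case: t => [j|[]] D.
- exact: not_dominant_pair_Cprime_inl D.
- exact/not_implied/dominant_pair_Cprime_u_implied_by/D.
- exact/not_implies/dominant_pair_Cprime_v_implies/D.
Qed.

End Cprime.

Theorem lemma4p10 (n : nat) (C : circuit 'I_n) :
  (forall i : 'I_n, ~ implies_var C i) ->
  (forall i : 'I_n, ~ implied_by_var C i) ->
  dominant_pair (Cprime C) (var_u 'I_n) (var_v 'I_n) /\
  (forall s t : 'I_n + bool, dominant_pair (Cprime C) s t ->
     (s = var_u 'I_n /\ t = var_v 'I_n) \/ (s = var_v 'I_n /\ t = var_u 'I_n)).
Proof.
move=> not_implies not_implied; split; first exact: dominant_pair_Cprime_uv.
case=> [i|b] t D; first by case: (dominant_pair_Cprime_inl not_implies not_implied D).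
case: t D => [j|b'] D.
  by case: (dominant_pair_Cprime_inl not_implies not_implied (dominant_pairC D)).
by case: D; case: b; case: b' => // _ _; [left|right].
Qed.
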